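(* Let $d\geq 2$, let $t\geq 2$ be an integer and $0\leq\epsilon<1$. Let $U$ be a $d\times d$ unitary matrix distributed according to an $\epsilon$-approximate unitary $t$-design. Then for any unit vectors $|\alpha\rangle,|\beta\rangle\in\mathbb{C}^d$ and any constant $0\leq\gamma\leq1-\epsilon$, $$\Pr_U\left[|\langle\alpha|U|\beta\rangle|^2>\frac{\gamma}{d}\right]\geq\frac{(1-\epsilon-\gamma)^2}{2(1+\epsilon)}.$$
   Context: A distribution $\{p_i,U_i\}$ over $d\times d$ unitaries is an $\epsilon$-approximate unitary $t$-design if for every polynomial $f$ homogeneous of degree $t$ in the entries of $U$ and homogeneous of degree $t$ in the entries of $U^*$, $(1-\epsilon)\int_{\mathrm{U}(d)}f(U)\,dU\leq\sum_ip_if(U_i)\leq(1+\epsilon)\int_{\mathrm{U}(d)}f(U)\,dU$, with $dU$ the Haar measure on $\mathrm{U}(d)$. *)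

From HB Require Import structures.
From mathcomp Require Import all_boot all_order all_algebra.
From mathcomp Require Import reals.
From mathcomp Require Export complex.
Set Implicit Arguments. Unset Strict Implicit. Unset Printing Implicit Defensive.
Import Order.TTheory GRing.Theory Num.Theory.
Local Open Scope ring_scope.
Local Open Scope complex_scope.

Section Unitary.
Variables (R : realType) (d : nat).
Local Notation C := R[i].

Definition adjmx m n (A : 'M[C]_(m, n)) : 'M[C]_(n, m) := (map_mx Num.conj A)^T.

Definition unitary (U : 'M[C]_d) : Prop := U *m adjmx U = 1%:M.

Definition unit_vec (v : 'cV[C]_d) : Prop := (adjmx v *m v) 0 0 = 1.

Definition braket (a : 'cV[C]_d) (U : 'M[C]_d) (b : 'cV[C]_d) : C :=
  (adjmx a *m U *m b) 0 0.

Definition monomial (s s' : seq ('I_d * 'I_d)) (U : 'M[C]_d) : C :=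
  \prod_(ij <- s) U ij.1 ij.2 * \prod_(ij <- s') (U ij.1 ij.2)^*.

Definition poly_fun (f : 'M[C]_d -> C) : Prop :=
  exists s : seq (C * seq ('I_d * 'I_d) * seq ('I_d * 'I_d)),
    forall U, unitary U -> f U = \sum_(m <- s) m.1.1 * monomial m.1.2 m.2 U.

Definition bihom_poly_fun (t : nat) (f : 'M[C]_d -> C) : Prop :=
  exists c : {ffun ({ffun 'I_t -> 'I_d * 'I_d} * {ffun 'I_t -> 'I_d * 'I_d}) -> C},
    forall U, unitary U ->
      f U = \sum_(x : {ffun 'I_t -> 'I_d * 'I_d} * {ffun 'I_t -> 'I_d * 'I_d})
              c x * (\prod_(k < t) U (x.1 k).1 (x.1 k).2)
                  * (\prod_(k < t) (U (x.2 k).1 (x.2 k).2)^*).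

(* The Haar integral  f |-> \int_{U(d)} f(U) dU  on polynomial functions,
   characterised as the normalised, positive, linear, left- and
   right-invariant functional (Haar measure via Riesz; unique). *)
Definition is_haar_integral (I : ('M[C]_d -> C) -> C) : Prop :=
  [/\ (forall f g, poly_fun f -> poly_fun g ->
          I (fun U => f U + g U) = I f + I g),
      (forall (c : C) f, poly_fun f -> I (fun U => c * f U) = c * I f),
      I (fun _ => 1) = 1,
      (forall f, poly_fun f -> (forall U, unitary U -> 0 <= f U) -> 0 <= I f)
    & (forall V f, unitary V -> poly_fun f -> I (fun U => f (V *m U)) = I f) /\
      (forall V f, unitary V -> poly_fun f -> I (fun U => f (U *m V)) = I f)].

Definition unitary_distr (I : finType) (p : I -> R) (Us : I -> 'M[C]_d) : Prop :=
  [/\ forall i, 0 <= p i, \sum_i p i = 1 & forall i, unitary (Us i)].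

Definition approx_design (haar : ('M[C]_d -> C) -> C) (eps : R) (t : nat)
    (I : finType) (p : I -> R) (Us : I -> 'M[C]_d) : Prop :=
  unitary_distr p Us /\
  forall f, bihom_poly_fun t f -> (forall U, unitary U -> 0 <= f U) ->
    (1 - eps)%:C * haar f <= \sum_i (p i)%:C * f (Us i) <= (1 + eps)%:C * haar f.

End Unitary.

From HB Require Import structures.
From mathcomp Require Import all_boot all_order all_algebra.
From mathcomp Require Import reals complex.
From mathcomp Require Import ring lra.
From Stdlib Require Import FunctionalExtensionality.
Set Implicit Arguments. Unset Strict Implicit. Unset Printing Implicit Defensive.
Import Order.TTheory GRing.Theory Num.Theory.
Local Open Scope complex_scope.
Local Open Scope ring_scope.

(* The overlap X = |<alpha|U|beta>|^2 is a polynomial of bidegree (1, 1) in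
   the entries of U.  Multiplying X^n (n <= 2 <= t) by t - n copies of
   sum_ij |U_ij|^2 / d, which equals 1 on U(d), makes it bihomogeneous of
   degree t, so the design reproduces E X and E X^2 up to factors 1 -+ eps.
   Left invariance of the Haar integral, through a Householder reflection,
   replaces alpha by a basis vector e_i; then sum_i |(U beta)_i|^2 = 1 gives
   E X = 1/d, and invariance under phases on the rows of U gives
   E X^2 = 2/(d(d+1)).  The Paley-Zygmund inequality
   (E X - theta)^2 <= E X^2 Pr[X > theta] with theta = gamma/d concludes. *)

Section PolyFun.
Variables (R : realType) (d : nat).
Local Notation C := R[i].
Local Notation M := 'M[C]_d.

Lemma poly_fun_ext (f g : M -> C) :
  (forall U, unitary U -> f U = g U) -> poly_fun f -> poly_fun g.
Proof. by move=> fg [s hs]; exists s => U hU; rewrite -fg // hs. Qed.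

Lemma poly_fun_const (c : C) : poly_fun (fun _ : M => c).
Proof.
by exists [:: (c, [::], [::])] => U _; rewrite big_seq1 /monomial !big_nil !mulr1.
Qed.

Lemma poly_fun_entry i j : poly_fun (fun U : M => U i j).
Proof.
exists [:: (1, [:: (i, j)], [::])] => U _.
by rewrite big_seq1 /monomial big_seq1 big_nil mul1r mulr1.
Qed.

Lemma poly_fun_add (f g : M -> C) :
  poly_fun f -> poly_fun g -> poly_fun (fun U => f U + g U).
Proof. by move=> [s1 h1] [s2 h2]; exists (s1 ++ s2) => U hU; rewrite big_cat h1 // h2. Qed.

Lemma monomial_cat s1 s1' s2 s2' (U : M) :
  monomial (s1 ++ s2) (s1' ++ s2') U = monomial s1 s1' U * monomial s2 s2' U.
Proof. by rewrite /monomial !big_cat /=; ring. Qed.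

Lemma poly_fun_mul (f g : M -> C) :
  poly_fun f -> poly_fun g -> poly_fun (fun U => f U * g U).
Proof.
move=> [s1 h1] [s2 h2].
exists [seq (m1.1.1 * m2.1.1, m1.1.2 ++ m2.1.2, m1.2 ++ m2.2) | m1 <- s1, m2 <- s2].
move=> U hU; rewrite h1 // h2 // big_allpairs_dep /= mulr_suml.
apply: eq_bigr => m1 _; rewrite mulr_sumr; apply: eq_bigr => m2 _.
by rewrite monomial_cat; ring.
Qed.

Lemma monomial_conj s s' (U : M) : (monomial s s' U)^* = monomial s' s U.
Proof.
rewrite /monomial rmorphM !rmorph_prod /= mulrC; congr (_ * _).
by apply: eq_bigr => ij _; exact: conjCK.
Qed.

Lemma poly_fun_conj (f : M -> C) : poly_fun f -> poly_fun (fun U => (f U)^*).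
Proof.
move=> [s h]; exists [seq (m.1.1^*, m.2, m.1.2) | m <- s] => U hU.
rewrite h // big_map rmorph_sum; apply: eq_bigr => m _.
by rewrite rmorphM /= monomial_conj.
Qed.

Lemma poly_fun_sum (T : Type) (r : seq T) (F : T -> M -> C) :
  (forall x, poly_fun (F x)) -> poly_fun (fun U => \sum_(x <- r) F x U).
Proof.
move=> hF; elim: r => [|x r IH].
  by apply: (poly_fun_ext _ (poly_fun_const 0)) => U _; rewrite big_nil.
by apply: (poly_fun_ext _ (poly_fun_add (hF x) IH)) => U _; rewrite big_cons.
Qed.

Lemma poly_fun_prod (T : Type) (r : seq T) (F : T -> M -> C) :
  (forall x, poly_fun (F x)) -> poly_fun (fun U => \prod_(x <- r) F x U).
Proof.
move=> hF; elim: r => [|x r IH].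
  by apply: (poly_fun_ext _ (poly_fun_const 1)) => U _; rewrite big_nil.
by apply: (poly_fun_ext _ (poly_fun_mul (hF x) IH)) => U _; rewrite big_cons.
Qed.

Lemma poly_fun_exp (f : M -> C) n : poly_fun f -> poly_fun (fun U => f U ^+ n).
Proof.
move=> hf; apply: (poly_fun_ext _ (poly_fun_prod (index_iota 0 n) (fun _ => hf))).
by move=> U _; rewrite prodr_const_nat subn0.
Qed.

End PolyFun.

Section Adjoint.
Variable R : realType.
Local Notation C := R[i].

Lemma adjmxE m n (A : 'M[C]_(m, n)) i j : adjmx A i j = (A j i)^*.
Proof. by rewrite !mxE. Qed.

Lemma adjmx_mul m n p (A : 'M[C]_(m, n)) (B : 'M[C]_(n, p)) :
  adjmx (A *m B) = adjmx B *m adjmx A.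
Proof. by rewrite /adjmx map_mxM trmx_mul. Qed.

Lemma adjmxK m n (A : 'M[C]_(m, n)) : adjmx (adjmx A) = A.
Proof. by apply/matrixP => i j; rewrite !adjmxE conjCK. Qed.

Lemma adjmxB m n (A B : 'M[C]_(m, n)) : adjmx (A - B) = adjmx A - adjmx B.
Proof. by apply/matrixP => i j; rewrite !mxE rmorphB. Qed.

Lemma adjmxZ m n c (A : 'M[C]_(m, n)) : adjmx (c *: A) = c^* *: adjmx A.
Proof. by apply/matrixP => i j; rewrite !mxE rmorphM. Qed.

Lemma adjmx1 n : adjmx (1%:M : 'M[C]_n) = 1%:M.
Proof.
by apply/matrixP => i j; rewrite !mxE eq_sym; case: (i == j); rewrite ?conjC1 ?conjC0.
Qed.

Lemma unitary_adjmx n (U : 'M[C]_n) : unitary U -> unitary (adjmx U).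
Proof. by rewrite /unitary adjmxK; exact: mulmx1C. Qed.

Definition innerv n (a b : 'cV[C]_n) : C := (adjmx a *m b) 0 0.

Lemma innervE n (a b : 'cV[C]_n) : innerv a b = \sum_l (a l 0)^* * b l 0.
Proof. by rewrite /innerv mxE; apply: eq_bigr => l _; rewrite adjmxE. Qed.

Lemma adjmx_mulmx_innerv n (a b : 'cV[C]_n) : adjmx a *m b = (innerv a b)%:M.
Proof. exact: mx11_scalar. Qed.

Lemma innervC n (a b : 'cV[C]_n) : innerv b a = (innerv a b)^*.
Proof.
rewrite !innervE rmorph_sum; apply: eq_bigr => l _.
by rewrite rmorphM /= conjCK mulrC.
Qed.

Lemma innervDl n (a b c : 'cV[C]_n) : innerv (a + b) c = innerv a c + innerv b c.
Proof. by rewrite !innervE -big_split; apply: eq_bigr => l _; rewrite !mxE rmorphD mulrDl. Qed.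

Lemma innervBl n (a b c : 'cV[C]_n) : innerv (a - b) c = innerv a c - innerv b c.
Proof. by rewrite !innervE -sumrB; apply: eq_bigr => l _; rewrite !mxE rmorphB mulrBl. Qed.

Lemma innervZl n k (a b : 'cV[C]_n) : innerv (k *: a) b = k^* * innerv a b.
Proof. by rewrite !innervE mulr_sumr; apply: eq_bigr => l _; rewrite !mxE rmorphM mulrA. Qed.

Lemma innervDr n (a b c : 'cV[C]_n) : innerv c (a + b) = innerv c a + innerv c b.
Proof. by rewrite innervC innervDl rmorphD /= -!innervC. Qed.

Lemma innervBr n (a b c : 'cV[C]_n) : innerv c (a - b) = innerv c a - innerv c b.
Proof. by rewrite innervC innervBl rmorphB /= -!innervC. Qed.

Lemma innervZr n k (a b : 'cV[C]_n) : innerv b (k *: a) = k * innerv b a.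
Proof. by rewrite innervC innervZl rmorphM /= conjCK -innervC. Qed.

Lemma innerv_deltal n (i : 'I_n) (b : 'cV[C]_n) : innerv (delta_mx i 0) b = b i 0.
Proof.
rewrite innervE (bigD1 i) //= big1 ?addr0; first by rewrite mxE !eqxx conjC1 mul1r.
by move=> l /negbTE il; rewrite mxE il conjC0 mul0r.
Qed.

Lemma innerv_eq0 n (v : 'cV[C]_n) : innerv v v = 0 -> v = 0.
Proof.
rewrite innervE => /eqP; rewrite psumr_eq0 => [/allP v0|l _]; last first.
  by rewrite mulrC mul_conjC_ge0.
apply/matrixP => i j; rewrite (ord1 j) mxE.
have /v0 : i \in index_enum 'I_n by rewrite mem_index_enum.
by rewrite /= mulf_eq0 conjC_eq0 orbb => /eqP.
Qed.

(* The Householder reflection [1 - 2 v v^* / <v, v>] with [v = w - y]. *)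
Lemma householder n (w y : 'cV[C]_n) :
  innerv w w = innerv y y -> innerv y w = innerv w y ->
  exists2 H : 'M[C]_n, unitary H & H *m w = y.
Proof.
move=> ww_yy yw_wy; set v := w - y.
have [v0|v_neq0] := eqVneq v 0.
  exists 1%:M; first by rewrite /unitary adjmx1 mul1mx.
  by rewrite mul1mx; apply/eqP; rewrite -subr_eq0 -/v v0.
set nv := innerv v v; set c := 2 / nv.
have nv_neq0 : nv != 0 by apply: contraNneq v_neq0 => /innerv_eq0 ->.
have c_real : c^* = c by rewrite /c fmorph_div /= conjC_nat /nv -innervC.
have c_nv : c * nv = 2 by rewrite /c mulfVK.
have vw : c * innerv v w = 1.
  have nvE : nv = 2 * innerv v w.
    by rewrite /nv /v !innervBl !innervBr -ww_yy -yw_wy; ring.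
  have two_neq0 : (2 : C) != 0 by rewrite pnatr_eq0.
  by apply: (mulfI two_neq0); rewrite mulrCA -nvE c_nv mulr1.
set P := v *m adjmx v.
have PP : P *m P = nv *: P.
  by rewrite /P mulmxA -(mulmxA v) adjmx_mulmx_innerv mul_mx_scalar scalemxAl.
have adjP : adjmx P = P by rewrite /P adjmx_mul adjmxK.
exists (1%:M - c *: P).
  rewrite /unitary adjmxB adjmxZ adjmx1 adjP c_real mulmxBl mul1mx mulmxBr mulmx1.
  rewrite -scalemxAl -scalemxAr scalerA PP scalerA -mulrA c_nv.
  by rewrite mulr_natr mulr2n scalerDl opprB addrK subrK.
rewrite mulmxBl mul1mx -scalemxAl /P -mulmxA adjmx_mulmx_innerv mul_mx_scalar.
by rewrite scalerA vw scale1r /v opprB addrC subrK.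
Qed.

(* The phase makes [<phi e_i, w> = |w_i|] real, as [householder] requires. *)
Lemma unit_vec_to_delta n (w : 'cV[C]_n) (i : 'I_n) : unit_vec w ->
  exists phi : C, `|phi| = 1 /\ exists2 H, unitary H & H *m w = phi *: delta_mx i 0.
Proof.
rewrite /unit_vec -/(innerv w w) => ww; set a := w i 0.
pose phi : C := if a == 0 then 1 else a / `|a|.
have phi_a : phi^* * a = `|a|.
  rewrite /phi; case: eqP => [->|/eqP a_neq0]; first by rewrite mulr0 normr0.
  by rewrite fmorph_div /= conj_normC mulrAC -normCKC expr2 mulfK ?normr_eq0.
have phi_norm : `|phi| = 1.
  rewrite /phi; case: eqP => [_|/eqP a_neq0]; first exact: normr1.
  by rewrite normf_div normr_id divff ?normr_eq0.
exists phi; split => //; apply: householder.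
  rewrite (innervZl phi) (innervZr phi) innerv_deltal mxE !eqxx mulr1 ww.
  by rewrite mulrC -normCK phi_norm expr1n.
by rewrite [RHS]innervC (innervZl phi) innerv_deltal phi_a conj_normC.
Qed.

End Adjoint.

(* Locked: letting unification unfold the complex norm is very slow. *)
HB.lock Definition overlap (R : realType) (d : nat)
    (a : 'cV[R[i]]_d) (U : 'M[R[i]]_d) (b : 'cV[R[i]]_d) : R[i] :=
  `|braket a U b| ^+ 2.
Arguments overlap {R d}.

Section Overlap.
Variables (R : realType) (d : nat).
Local Notation C := R[i].
Local Notation M := 'M[C]_d.
Local Notation V := 'cV[C]_d.

Lemma braketE (a : V) (U : M) (b : V) : braket a U b = innerv a (U *m b).
Proof. by rewrite /braket -mulmxA. Qed.

Lemma braket_mulmxl (a : V) (W U : M) (b : V) :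
  braket a (W *m U) b = braket (adjmx W *m a) U b.
Proof. by rewrite /braket adjmx_mul adjmxK !mulmxA. Qed.

Lemma overlap_mulmxl (a : V) (W U : M) (b : V) :
  overlap a (W *m U) b = overlap (adjmx W *m a) U b.
Proof. by rewrite unlock braket_mulmxl. Qed.

Lemma braket_deltal i (U : M) (b : V) : braket (delta_mx i 0) U b = (U *m b) i 0.
Proof. by rewrite braketE innerv_deltal. Qed.

Lemma unit_vec_delta (i : 'I_d) : unit_vec (delta_mx i 0 : V).
Proof. by rewrite /unit_vec -/(innerv _ _) innerv_deltal mxE !eqxx. Qed.

Lemma overlapE (a : V) (U : M) (b : V) :
  overlap a U b = braket a U b * (braket a U b)^*.
Proof. by rewrite unlock normCK. Qed.

Lemma overlapZl (k : C) (a : V) (U : M) (b : V) :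
  `|k| = 1 -> overlap (k *: a) U b = overlap a U b.
Proof. by move=> k1; rewrite unlock !braketE (innervZl k) normrM norm_conjC k1 mul1r. Qed.

Lemma poly_fun_braket (a b : V) : poly_fun (fun U => braket a U b).
Proof.
apply: (poly_fun_ext (f := fun U : M => \sum_l \sum_m (a l 0)^* * U l m * b m 0)).
  move=> U _; rewrite braketE innervE; apply: eq_bigr => l _.
  by rewrite mxE mulr_sumr; apply: eq_bigr => m _; rewrite mulrA.
apply: poly_fun_sum => l; apply: poly_fun_sum => m.
apply: poly_fun_mul; last exact: poly_fun_const.
by apply: poly_fun_mul; [exact: poly_fun_const | exact: poly_fun_entry].
Qed.

Lemma poly_fun_mulmx_entry (b : V) i : poly_fun (fun U : M => (U *m b) i 0).
Proof.
by apply: poly_fun_ext (poly_fun_braket (delta_mx i 0) b) => U _; rewrite braket_deltal.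
Qed.

Lemma poly_fun_overlap (a b : V) : poly_fun (fun U => overlap a U b).
Proof.
apply: (poly_fun_ext (f := fun U => braket a U b * (braket a U b)^*)).
  by move=> U _; rewrite overlapE.
by apply: poly_fun_mul; [|apply: poly_fun_conj]; apply: poly_fun_braket.
Qed.

Lemma sum_overlap_delta (U : M) (b : V) : unitary U -> unit_vec b ->
  \sum_i overlap (delta_mx i 0) U b = 1.
Proof.
move=> hU hb; rewrite -hb -/(innerv b b).
have -> : innerv b b = innerv (U *m b) (U *m b).
  by rewrite /innerv adjmx_mul -mulmxA (mulmxA (adjmx U)) mulmx1C // mul1mx.
by rewrite innervE; apply: eq_bigr => i _; rewrite overlapE braket_deltal mulrC.
Qed.

End Overlap.

Arguments unit_vec_delta {R d} i.

Ltac poly_fun_auto :=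
  repeat match goal with
  | |- poly_fun (fun U => overlap _ U _) => apply: poly_fun_overlap
  | |- poly_fun (fun U => fun_of_matrix (U *m _) _ _) => apply: poly_fun_mulmx_entry
  | |- poly_fun (fun _ => _ + _) => apply: poly_fun_add
  | |- poly_fun (fun _ => _ * _) => apply: poly_fun_mul
  | |- poly_fun (fun _ => _ ^+ _) => apply: poly_fun_exp
  | |- poly_fun (fun _ => _^*) => apply: poly_fun_conj
  | |- _ => assumption
  | |- poly_fun (fun _ => _) => apply: poly_fun_const
  end.

Section HaarIntegral.
Variables (R : realType) (d : nat).
Local Notation C := R[i].
Local Notation M := 'M[C]_d.
Variable haar : (M -> C) -> C.
Hypothesis haarP : is_haar_integral haar.

Lemma haarD (f g : M -> C) :
  poly_fun f -> poly_fun g -> haar (fun U => f U + g U) = haar f + haar g.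
Proof. by case: haarP => + _ _ _ _; apply. Qed.

Lemma haarZ (c : C) (f : M -> C) : poly_fun f -> haar (fun U => c * f U) = c * haar f.
Proof. by case: haarP => _ + _ _ _; apply. Qed.

Lemma haar1 : haar (fun _ => 1) = 1.
Proof. by case: haarP. Qed.

Lemma haar_mulmxl (V : M) (f : M -> C) :
  unitary V -> poly_fun f -> haar (fun U => f (V *m U)) = haar f.
Proof. by case: haarP => _ _ _ _ [+ _]; apply. Qed.

(* By positivity, applied to [f - g] and to [g - f]. *)
Lemma haar_eq_on_unitary (f g : M -> C) :
  poly_fun f -> poly_fun g -> (forall U, unitary U -> f U = g U) -> haar f = haar g.
Proof.
move=> poly_f poly_g fg; case: haarP => _ _ _ haar_ge0 _.
pose h U := f U + (-1) * g U.
have poly_h : poly_fun h by rewrite /h; poly_fun_auto.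
have h0 U : unitary U -> h U = 0 by move=> hU; rewrite /h fg // mulN1r subrr.
have h_eq0 : haar h = 0.
  have h_ge0 : 0 <= haar h by apply: haar_ge0 => // U /h0 ->; rewrite lexx.
  have : 0 <= haar (fun U => (-1) * h U).
    apply: haar_ge0 => [|U /h0 ->]; last by rewrite mulr0 lexx.
    by poly_fun_auto.
  by rewrite haarZ // mulN1r oppr_ge0 => h_le0; apply/le_anti; rewrite h_ge0 h_le0.
have -> : f = (fun U => g U + h U) by apply: functional_extensionality => U; rewrite /h; ring.
by rewrite haarD // h_eq0 addr0.
Qed.

Lemma haar_sum (T : Type) (r : seq T) (F : T -> M -> C) :
  (forall x, poly_fun (F x)) ->
  haar (fun U => \sum_(x <- r) F x U) = \sum_(x <- r) haar (F x).
Proof.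
move=> pF; elim: r => [|x r IH].
  have -> : (fun U => \sum_(x <- [::]) F x U) = (fun U => 0 * 1).
    by apply: functional_extensionality => U; rewrite big_nil mul0r.
  by rewrite haarZ ?big_nil ?mul0r //; exact: poly_fun_const.
rewrite big_cons -IH -haarD //; last exact: poly_fun_sum.
by congr haar; apply: functional_extensionality => U; rewrite big_cons.
Qed.

Lemma haar_eq0_of_left_eigen (V : M) (lambda : C) (f : M -> C) :
  unitary V -> poly_fun f -> lambda != 1 ->
  (forall U, f (V *m U) = lambda * f U) -> haar f = 0.
Proof.
move=> V_unitary poly_f lambda_neq1 fV.
have : haar f = lambda * haar f.
  rewrite -haarZ // -(haar_mulmxl V_unitary poly_f).
  by congr haar; apply: functional_extensionality.
move/eqP; rewrite -subr_eq0 -{1}[haar f]mul1r -mulrBl mulf_eq0 subr_eq0 eq_sym.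
by rewrite (negbTE lambda_neq1) => /eqP.
Qed.

End HaarIntegral.

Section PhaseMatrix.
Variables (R : realType) (d : nat).
Local Notation C := R[i].

Definition phase_mx (m : 'I_d) (z : C) : 'M[C]_d :=
  diag_mx (\row_j (if j == m then z else 1)).

Lemma unitary_phase_mx (m : 'I_d) (z : C) : `|z| = 1 -> unitary (phase_mx m z).
Proof.
move=> z1; apply/matrixP => i j; rewrite mul_diag_mx !mxE.
have [<-|ij] := eqVneq i j; last by rewrite mulr0n conjC0 mulr0.
by case: eqP; rewrite ?conjC1 ?mulr1 // -normCK z1 expr1n.
Qed.

Lemma phase_mx_mulmxE (m : 'I_d) (z : C) (U : 'M[C]_d) (b : 'cV[C]_d) j :
  (phase_mx m z *m U *m b) j 0 = (if j == m then z else 1) * (U *m b) j 0.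
Proof. by rewrite -mulmxA mul_diag_mx !mxE. Qed.

End PhaseMatrix.

Section HaarMoments.
Variables (R : realType) (d : nat).
Local Notation C := R[i].
Local Notation M := 'M[C]_d.
Local Notation V := 'cV[C]_d.
Variable haar : (M -> C) -> C.
Hypothesis haarP : is_haar_integral haar.
Variable beta : V.
Hypothesis beta_unit : unit_vec beta.
Local Notation e i := (delta_mx i 0 : V).

Lemma haar_overlap_invariant (w : V) (i : 'I_d) n : unit_vec w ->
  haar (fun U => overlap w U beta ^+ n) = haar (fun U => overlap (e i) U beta ^+ n).
Proof.
move=> w_unit; have [phi [phi1 [H H_unitary Hw]]] := unit_vec_to_delta i w_unit.
rewrite -(haar_mulmxl haarP (unitary_adjmx H_unitary)); last first.
  exact/poly_fun_exp/poly_fun_overlap.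
congr haar; apply: functional_extensionality => U.
by rewrite overlap_mulmxl adjmxK Hw overlapZl.
Qed.

Lemma haar_overlap (alpha : V) : (0 < d)%N -> unit_vec alpha ->
  haar (fun U => overlap alpha U beta) = d%:R^-1.
Proof.
move=> d_gt0 alpha_unit; pose i : 'I_d := Ordinal d_gt0.
have invariant w : unit_vec w ->
    haar (fun U => overlap w U beta) = haar (fun U => overlap (e i) U beta).
  have expr1_fun w' : (fun U => overlap w' U beta ^+ 1) = (fun U => overlap w' U beta).
    by apply: functional_extensionality => U; rewrite expr1.
  by move=> w_unit; rewrite -!expr1_fun; exact: haar_overlap_invariant.
have sum1 : \sum_(l < d) haar (fun U => overlap (e l) U beta) = 1.
  rewrite -(haar_sum haarP) => [|l]; last exact: poly_fun_overlap.
  rewrite -(haar1 haarP); apply: (haar_eq_on_unitary haarP) => [||U U_unitary].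
  - by apply: poly_fun_sum => l; apply: poly_fun_overlap.
  - exact: poly_fun_const.
  - exact: sum_overlap_delta.
rewrite (eq_bigr _ (fun l _ => invariant _ (unit_vec_delta l))) sumr_const card_ord in sum1.
have d_neq0 : d%:R != 0 :> C by rewrite pnatr_eq0 -lt0n.
by apply: (mulfI d_neq0); rewrite invariant // mulr_natl sum1 mulfV.
Qed.

Lemma sqr_lincomb_mul_conj (c s x y : C) : c^* = c -> s^* = s ->
  ((c * x + s * y) * (c * x + s * y)^*) ^+ 2 =
    c ^+ 4 * (x * x^*) ^+ 2 + s ^+ 4 * (y * y^*) ^+ 2
    + 4%:R * c ^+ 2 * s ^+ 2 * (x * x^* * (y * y^*))
    + c ^+ 2 * s ^+ 2 * ((x * y^*) ^+ 2 + (x^* * y) ^+ 2)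
    + 2%:R * c * s * ((c ^+ 2 * (x * x^*) + s ^+ 2 * (y * y^*)) * (x * y^* + x^* * y)).
Proof. by move=> c_real s_real; rewrite rmorphD !rmorphM /= c_real s_real; ring. Qed.

Section TwoRows.
Variables l m : 'I_d.
Hypothesis l_neq_m : l != m.
Local Notation x U := ((U *m beta) l 0).
Local Notation y U := ((U *m beta) m 0).

Let N1_neq1 : (-1 : C) != 1.
Proof. by rewrite eq_sym -subr_eq0 opprK -mulr2n pnatr_eq0. Qed.

Lemma haar_cross_odd_eq0 (k1 k2 : C) :
  haar (fun U => (k1 * (x U * (x U)^*) + k2 * (y U * (y U)^*))
                 * (x U * (y U)^* + (x U)^* * y U)) = 0.
Proof.
apply: (haar_eq0_of_left_eigen haarP (unitary_phase_mx m (normrN1 _)) _ N1_neq1).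
  by poly_fun_auto.
move=> U; rewrite !phase_mx_mulmxE eqxx (negbTE l_neq_m) !mul1r.
by rewrite rmorphM rmorphN1 /=; ring.
Qed.

Lemma haar_cross_sqr_eq0 :
  haar (fun U => (x U * (y U)^*) ^+ 2 + ((x U)^* * y U) ^+ 2) = 0.
Proof.
have i2_neq1 : 'i ^+ 2 != 1 :> C by rewrite sqrCi N1_neq1.
apply: (haar_eq0_of_left_eigen haarP (unitary_phase_mx m (@normCi C)) _ i2_neq1).
  by poly_fun_auto.
move=> U; rewrite !phase_mx_mulmxE eqxx (negbTE l_neq_m) !mul1r.
by rewrite rmorphM /= (@conjCi C); ring.
Qed.

(* For the unit vector [w = 3/5 e_l + 4/5 e_m] (rational coordinates, so no
   square roots), expanding [|<w|U|beta>|^4] and discarding the two cross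
   terms gives [a = (c^4 + s^4) a + 4 c^2 s^2 b] with [c^2 + s^2 = 1], where
   [a] and [b] are the integrals of [|x|^4] and [|x|^2 |y|^2]. *)
Lemma haar_overlap_delta_mul :
  haar (fun U => overlap (e l) U beta * overlap (e m) U beta)
  = haar (fun U => overlap (e l) U beta ^+ 2) / 2.
Proof.
set a := haar (fun U => _ ^+ 2); set b := haar _.
pose c : C := 3%:R / 5%:R; pose s : C := 4%:R / 5%:R.
have c_real : c^* = c by rewrite fmorph_div /= !conjC_nat.
have s_real : s^* = s by rewrite fmorph_div /= !conjC_nat.
pose w := c *: e l + s *: e m.
have w_unit : unit_vec w.
  rewrite /unit_vec -/(innerv w w) /w !innervDl !innervDr !(innervZl c) !(innervZl s).
  rewrite !innervZr !innerv_deltal !mxE !eqxx (negbTE l_neq_m) eq_sym (negbTE l_neq_m) /=.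
  by rewrite c_real s_real /c /s; field.
have expand U : overlap w U beta ^+ 2 =
    c ^+ 4 * overlap (e l) U beta ^+ 2 + s ^+ 4 * overlap (e m) U beta ^+ 2
    + 4%:R * c ^+ 2 * s ^+ 2 * (overlap (e l) U beta * overlap (e m) U beta)
    + c ^+ 2 * s ^+ 2 * ((x U * (y U)^*) ^+ 2 + ((x U)^* * y U) ^+ 2)
    + 2%:R * c * s * ((c ^+ 2 * (x U * (x U)^*) + s ^+ 2 * (y U * (y U)^*))
                      * (x U * (y U)^* + (x U)^* * y U)).
  rewrite !overlapE braketE /w innervDl (innervZl c) (innervZl s) -!braketE.
  by rewrite !braket_deltal c_real s_real; exact: sqr_lincomb_mul_conj.
have key : a = c ^+ 4 * a + s ^+ 4 * a + 4%:R * c ^+ 2 * s ^+ 2 * b.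
  rewrite {1}/a -(haar_overlap_invariant l 2 w_unit) (functional_extensionality _ _ expand).
  rewrite !haarD ?haarZ ?haar_cross_odd_eq0 ?haar_cross_sqr_eq0; try by poly_fun_auto.
  by rewrite (haar_overlap_invariant l 2 (unit_vec_delta m)) -/a -/b !mulr0 !addr0.
have k_neq0 : (576%:R / 625%:R : C) != 0 by rewrite mulf_neq0 ?invr_eq0 ?pnatr_eq0.
have : 576%:R / 625%:R * (b - a / 2) = c ^+ 4 * a + s ^+ 4 * a + 4%:R * c ^+ 2 * s ^+ 2 * b - a.
  by rewrite /c /s; field.
by rewrite -key subrr => /eqP; rewrite mulf_eq0 (negbTE k_neq0) subr_eq0 => /eqP.
Qed.

End TwoRows.

Lemma haar_overlap_sqr (alpha : V) : (0 < d)%N -> unit_vec alpha ->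
  haar (fun U => overlap alpha U beta ^+ 2) = 2 / (d%:R * (d%:R + 1)).
Proof.
move=> d_gt0 alpha_unit; pose i : 'I_d := Ordinal d_gt0.
rewrite (haar_overlap_invariant i) //; set a := haar _.
have pair l m : haar (fun U => overlap (e l) U beta * overlap (e m) U beta)
                = if l == m then a else a / 2.
  have al : haar (fun U => overlap (e l) U beta ^+ 2) = a.
    exact: haar_overlap_invariant (unit_vec_delta l).
  have [<-|lm] := eqVneq l m; last by rewrite haar_overlap_delta_mul // al.
  by rewrite -al; congr haar; apply: functional_extensionality => U; rewrite expr2.
have poly_pair l m : poly_fun (fun U => overlap (e l) U beta * overlap (e m) U beta).
  by poly_fun_auto.
have sum1 : \sum_(l < d) \sum_(m < d)
              haar (fun U => overlap (e l) U beta * overlap (e m) U beta) = 1.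
  under eq_bigr do rewrite -(haar_sum haarP) //.
  rewrite -(haar_sum haarP) => [|l]; last exact: poly_fun_sum.
  rewrite -(haar1 haarP); apply: (haar_eq_on_unitary haarP) => [||U U_unitary].
  - by apply: poly_fun_sum => l; exact: poly_fun_sum.
  - exact: poly_fun_const.
  rewrite -(mulr1 1) -{1}(sum_overlap_delta U_unitary beta_unit) mulr_suml.
  by apply: eq_bigr => l _; rewrite -(sum_overlap_delta U_unitary beta_unit) mulr_sumr.
have row_sum l : \sum_(m < d) (if l == m then a else a / 2) = (d%:R + 1) * (a / 2).
  rewrite (bigD1 l) //= eqxx (eq_bigr (fun _ => a / 2)) => [|m]; last first.
    by rewrite eq_sym => /negbTE ->.
  rewrite sumr_const cardC1 card_ord -[_ *+ _]mulr_natl.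
  have dE : d%:R = (d.-1)%:R + 1 :> C by rewrite natr1 prednK.
  by rewrite dE; field.
rewrite (eq_bigr (fun _ => (d%:R + 1) * (a / 2))) in sum1; last first.
  by move=> l _; rewrite -(row_sum l); apply: eq_bigr => m _; exact: pair.
rewrite sumr_const card_ord -[_ *+ _]mulr_natl in sum1.
have d_neq0 : d%:R != 0 :> C by rewrite pnatr_eq0 -lt0n.
have d1_neq0 : d%:R + 1 != 0 :> C by rewrite natr1 pnatr_eq0.
have -> : a = 2 * (d%:R * ((d%:R + 1) * (a / 2))) / (d%:R * (d%:R + 1)).
  by field; rewrite d_neq0 d1_neq0.
by rewrite sum1 mulr1.
Qed.

End HaarMoments.

Section Padding.
Variables (R : realType) (d : nat).
Local Notation C := R[i].
Local Notation M := 'M[C]_d.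
Local Notation V := 'cV[C]_d.
Local Notation P := ('I_d * 'I_d)%type.

Definition sesqform (g : P -> P -> C) (U : M) : C :=
  \sum_(pr : P * P) g pr.1 pr.2 * U pr.1.1 pr.1.2 * (U pr.2.1 pr.2.2)^*.

Lemma poly_fun_sesqform g : poly_fun (sesqform g).
Proof.
apply: poly_fun_sum => pr; apply: poly_fun_mul; last exact/poly_fun_conj/poly_fun_entry.
by apply: poly_fun_mul; [exact: poly_fun_const | exact: poly_fun_entry].
Qed.

(* Expanding the product of sums gives the coefficient of the monomial
   indexed by [x] as the product of the [g k (x.1 k) (x.2 k)]. *)
Lemma bihom_poly_fun_prod_sesqform t (g : 'I_t -> P -> P -> C) :
  bihom_poly_fun t (fun U => \prod_(k < t) sesqform (g k) U).
Proof.
exists [ffun x : {ffun 'I_t -> P} * {ffun 'I_t -> P} => \prod_(k < t) g k (x.1 k) (x.2 k)].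
move=> U _; rewrite /sesqform bigA_distr_bigA /=.
pose split_ffun (f : {ffun 'I_t -> P * P}) := ([ffun k => (f k).1], [ffun k => (f k).2]).
pose pair_ffun (x : {ffun 'I_t -> P} * {ffun 'I_t -> P}) := [ffun k => (x.1 k, x.2 k)].
rewrite (reindex pair_ffun); last first.
  exists split_ffun => [[x1 x2] _|f _].
    by congr (_, _); apply/ffunP => k; rewrite !ffunE.
  by apply/ffunP => k; rewrite !ffunE; case: (f k).
apply: eq_bigr => x _; rewrite ffunE -!big_split /=.
by apply: eq_bigr => k _; rewrite ffunE.
Qed.

Definition overlap_coef (a b : V) (p r : P) : C :=
  (a p.1 0)^* * b p.2 0 * (a r.1 0 * (b r.2 0)^*).

Definition frobenius_coef (p r : P) : C := (p == r)%:R / d%:R.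

Lemma overlap_sesqform (a b : V) (U : M) : overlap a U b = sesqform (overlap_coef a b) U.
Proof.
have braket_pairs : braket a U b = \sum_(p : P) (a p.1 0)^* * b p.2 0 * U p.1 p.2.
  rewrite braketE innervE -(pair_bigA _ (fun i j => (a i 0)^* * b j 0 * U i j)).
  apply: eq_bigr => l _; rewrite mxE mulr_sumr; apply: eq_bigr => m _ /=.
  by rewrite mulrA mulrAC.
rewrite overlapE braket_pairs rmorph_sum mulr_suml /sesqform.
rewrite -(pair_bigA _ (fun p r : P => overlap_coef a b p r * U p.1 p.2 * (U r.1 r.2)^*)).
apply: eq_bigr => p _; rewrite mulr_sumr; apply: eq_bigr => r _.
by rewrite !rmorphM /= conjCK /overlap_coef; ring.
Qed.

Lemma sesqform_frobenius (U : M) : (0 < d)%N -> unitary U -> sesqform frobenius_coef U = 1.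
Proof.
move=> d_gt0 U_unitary; have d_neq0 : d%:R != 0 :> C by rewrite pnatr_eq0 -lt0n.
rewrite /sesqform -(pair_bigA _ (fun p r : P => frobenius_coef p r * U p.1 p.2 * (U r.1 r.2)^*)).
rewrite (eq_bigr (fun p => d%:R^-1 * (U p.1 p.2 * (U p.1 p.2)^*))) => [|p _]; last first.
  rewrite (bigD1 p) //= big1 ?addr0 => [|r /negbTE rp]; last first.
    by rewrite /frobenius_coef eq_sym rp !mul0r.
  by rewrite /frobenius_coef eqxx mul1r mulrA.
rewrite -mulr_sumr -(pair_bigA _ (fun i j => U i j * (U i j)^*)) /=.
rewrite (eq_bigr (fun _ => 1)) => [|i _]; last first.
  transitivity ((U *m adjmx U) i i); last by rewrite U_unitary mxE eqxx.
  by rewrite mxE; apply: eq_bigr => j _; rewrite !mxE.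
by rewrite sumr_const card_ord mulVf.
Qed.

(* [|<a|U|b>|^(2n)] padded to bidegree [(t, t)] with [t - n] factors
   [sum_ij |U_ij|^2 / d], which equal [1] on U(d). *)
Definition padded_overlap (t n : nat) (a b : V) (U : M) : C :=
  \prod_(k < t) sesqform (if (k < n)%N then overlap_coef a b else frobenius_coef) U.

Lemma bihom_padded_overlap t n a b : bihom_poly_fun t (padded_overlap t n a b).
Proof. exact: bihom_poly_fun_prod_sesqform. Qed.

Lemma poly_fun_padded_overlap t n a b : poly_fun (padded_overlap t n a b).
Proof. by apply: poly_fun_prod => k; exact: poly_fun_sesqform. Qed.

Lemma padded_overlapE t n a b (U : M) : (n <= t)%N -> (0 < d)%N -> unitary U ->
  padded_overlap t n a b U = overlap a U b ^+ n.
Proof.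
move=> nt d_gt0 U_unitary.
rewrite /padded_overlap (eq_bigr (fun k : 'I_t => if (k < n)%N then overlap a U b else 1)).
  by rewrite -big_mkcond -(big_ord_widen _ (fun _ => overlap a U b) nt) prodr_const card_ord.
by move=> k _; case: ifP => _; rewrite ?overlap_sesqform ?sesqform_frobenius.
Qed.

End Padding.

Lemma overlap_ge0 (R : realType) d (a : 'cV[R[i]]_d) U b : 0 <= overlap a U b.
Proof. by rewrite unlock exprn_ge0. Qed.

Lemma approx_design_overlap_moment (R : realType) d (haar : ('M[R[i]]_d -> R[i]) -> R[i])
    (eps : R) t (I : finType) (p : I -> R) Us (a b : 'cV[R[i]]_d) (x : I -> R) (mu : R) n :
  is_haar_integral haar -> approx_design haar eps t p Us -> (0 < d)%N -> (n <= t)%N ->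
  (forall k, overlap a (Us k) b = (x k)%:C) ->
  haar (fun U => overlap a U b ^+ n) = mu%:C ->
  (1 - eps) * mu <= \sum_k p k * x k ^+ n <= (1 + eps) * mu.
Proof.
move=> haarP [[_ _ Us_unitary] design] d_gt0 nt xE haar_mu.
have padE U : unitary U -> padded_overlap t n a b U = overlap a U b ^+ n.
  exact: padded_overlapE.
have := design _ (bihom_padded_overlap t n a b).
rewrite (haar_eq_on_unitary haarP (poly_fun_padded_overlap t n a b) _ padE); last first.
  exact/poly_fun_exp/poly_fun_overlap.
rewrite haar_mu (eq_bigr (fun k => (p k * x k ^+ n)%:C)) => [|k _]; last first.
  by rewrite padE // xE rmorphM rmorphXn.
rewrite -rmorph_sum -!rmorphM !lecR; apply=> U /padE ->.
by rewrite exprn_ge0 ?overlap_ge0.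
Qed.

Section PaleyZygmund.
Variables (R : realFieldType) (I : finType).

(* Expand [0 <= sum_ij w_i w_j (x_i - x_j)^2]. *)
Lemma weighted_cauchy_schwarz (w x : I -> R) : (forall i, 0 <= w i) ->
  (\sum_i w i * x i) ^+ 2 <= (\sum_i w i * x i ^+ 2) * \sum_i w i.
Proof.
move=> w_ge0.
set W := \sum_i w i; set Sx := \sum_i w i * x i; set Sxx := \sum_i w i * x i ^+ 2.
have expand i : \sum_j w i * w j * (x i - x j) ^+ 2
    = w i * x i ^+ 2 * W + w i * Sxx - 2 * (w i * x i) * Sx.
  rewrite /W /Sxx /Sx !mulr_sumr -big_split -sumrB /=.
  by apply: eq_bigr => j _; ring.
have : 0 <= \sum_i \sum_j w i * w j * (x i - x j) ^+ 2.
  apply: sumr_ge0 => i _; apply: sumr_ge0 => j _.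
  exact: mulr_ge0 (mulr_ge0 (w_ge0 i) (w_ge0 j)) (sqr_ge0 _).
under eq_bigr => i _ do rewrite expand.
rewrite sumrB big_split /= -!mulr_suml -mulr_sumr.
by rewrite -/W -/Sx -/Sxx => h; nra.
Qed.

Lemma paley_zygmund (p x : I -> R) (theta : R) :
  (forall i, 0 <= p i) -> \sum_i p i = 1 -> 0 <= theta -> theta <= \sum_i p i * x i ->
  (\sum_i p i * x i - theta) ^+ 2 <= (\sum_i p i * x i ^+ 2) * \sum_(i | theta < x i) p i.
Proof.
move=> p_ge0 p_sum1 theta_ge0 theta_le.
pose w i := if theta < x i then p i else 0.
have w_ge0 i : 0 <= w i by rewrite /w; case: ifP.
have head : \sum_i p i * x i <= \sum_i w i * x i + theta.
  rewrite -[theta]mul1r -p_sum1 mulr_suml -big_split /=.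
  apply: ler_sum => i _; rewrite /w; case: ifPn => [_|]; last first.
    by rewrite -leNgt mul0r add0r => /(ler_wpM2l (p_ge0 i)).
  by rewrite lerDl mulr_ge0.
have tail2 : \sum_i w i * x i ^+ 2 <= \sum_i p i * x i ^+ 2.
  apply: ler_sum => i _; rewrite /w; case: ifP => _ //.
  by rewrite mul0r mulr_ge0 ?sqr_ge0.
have -> : \sum_(i | theta < x i) p i = \sum_i w i by rewrite big_mkcond.
have W_ge0 : 0 <= \sum_i w i by apply: sumr_ge0.
have CS := weighted_cauchy_schwarz x w_ge0.
have gap_le : (\sum_i p i * x i - theta) ^+ 2 <= (\sum_i w i * x i) ^+ 2.
  by rewrite ler_sqr ?nnegrE; lra.
apply: (le_trans gap_le); apply: (le_trans CS).
exact: ler_wpM2r.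
Qed.

Lemma tail_bound_of_moments (p x : I -> R) (eps gamma D : R) :
  (forall i, 0 <= p i) -> \sum_i p i = 1 -> 0 < D -> 0 <= eps ->
  0 <= gamma -> gamma <= 1 - eps ->
  (1 - eps) / D <= \sum_i p i * x i ->
  \sum_i p i * x i ^+ 2 <= (1 + eps) * (2 / (D * (D + 1))) ->
  (1 - eps - gamma) ^+ 2 / (2 * (1 + eps)) <= \sum_(i | gamma / D < x i) p i.
Proof.
move=> p_ge0 p_sum1 D_gt0 eps_ge0 gamma_ge0 gamma_le mean_ge mom2_le.
set Pr := \sum_(i | _) _; set E := \sum_i p i * x i; set S2 := \sum_i p i * x i ^+ 2.
have Pr_ge0 : 0 <= Pr by apply: sumr_ge0.
have gap : (1 - eps - gamma) / D <= E - gamma / D.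
  by rewrite mulrBl lerD2r.
have gap_ge0 : 0 <= (1 - eps - gamma) / D by apply: divr_ge0; lra.
have theta_le : gamma / D <= E by lra.
have PZ := paley_zygmund p_ge0 p_sum1 (divr_ge0 gamma_ge0 (ltW D_gt0)) theta_le.
have sq_le : ((1 - eps - gamma) / D) ^+ 2 <= S2 * Pr.
  by apply: le_trans PZ; rewrite ler_sqr ?nnegrE //; lra.
have S2_le : S2 <= (1 + eps) * 2 / D ^+ 2.
  apply: (le_trans mom2_le); rewrite -mulrA ler_wpM2l ?ler_pM2l //; first lra.
  by rewrite lef_pV2 ?posrE ?exprn_gt0 ?mulr_gt0 //; nra.
have D2_gt0 : 0 < D ^+ 2 by rewrite exprn_gt0.
rewrite ler_pdivrMr; last lra.
have -> : (1 - eps - gamma) ^+ 2 = D ^+ 2 * ((1 - eps - gamma) / D) ^+ 2.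
  by field; rewrite gt_eqF.
have -> : Pr * (2 * (1 + eps)) = D ^+ 2 * ((1 + eps) * 2 / D ^+ 2 * Pr).
  by field; rewrite gt_eqF.
apply: ler_wpM2l; first exact: ltW.
by apply: (le_trans sq_le); exact: ler_wpM2r.
Qed.

End PaleyZygmund.

Theorem lemma2 (R : realType) (d t : nat) (eps gamma : R)
    (haar : ('M[R[i]]_d -> R[i]) -> R[i])
    (I : finType) (p : I -> R) (Us : I -> 'M[R[i]]_d)
    (alpha beta : 'cV[R[i]]_d) :
  (2 <= d)%N -> (2 <= t)%N -> 0 <= eps -> eps < 1 ->
  is_haar_integral haar ->
  approx_design haar eps t p Us ->
  unit_vec alpha -> unit_vec beta ->
  0 <= gamma -> gamma <= 1 - eps ->
  \sum_(k | (gamma / d%:R)%:C < `|braket alpha (Us k) beta| ^+ 2) p k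
    >= (1 - eps - gamma) ^+ 2 / (2 * (1 + eps)).
Proof.
move=> d_ge2 t_ge2 eps_ge0 _ haarP design alpha_unit beta_unit gamma_ge0 gamma_le.
have d_gt0 : (0 < d)%N := ltnW d_ge2.
have [[p_ge0 p_sum1 _] _] := design.
pose x k := complex.Re (braket alpha (Us k) beta) ^+ 2
            + complex.Im (braket alpha (Us k) beta) ^+ 2.
have normE k : `|braket alpha (Us k) beta| ^+ 2 = (x k)%:C by rewrite add_Re2_Im2.
clearbody x.
have xE k : overlap alpha (Us k) beta = (x k)%:C by rewrite unlock normE.
have haar_mom1 : haar (fun U => overlap alpha U beta ^+ 1) = (d%:R^-1)%:C.
  rewrite fmorphV rmorph_nat -(haar_overlap haarP beta_unit d_gt0 alpha_unit).
  by congr haar; apply: functional_extensionality => U; rewrite expr1.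
have haar_mom2 : haar (fun U => overlap alpha U beta ^+ 2) = (2 / (d%:R * (d%:R + 1)))%:C.
  rewrite haar_overlap_sqr //.
  by rewrite fmorph_div rmorphM (rmorph_nat _ 2) rmorphD !rmorph_nat rmorph1.
have /andP[mean_ge _] :=
  approx_design_overlap_moment haarP design d_gt0 (ltnW t_ge2) xE haar_mom1.
have /andP[_ mom2_le] := approx_design_overlap_moment haarP design d_gt0 t_ge2 xE haar_mom2.
under eq_bigl => k do rewrite normE ltcR.
apply: (tail_bound_of_moments p_ge0 p_sum1 _ eps_ge0 gamma_ge0 gamma_le _ mom2_le).
  by rewrite ltr0n.
by under eq_bigr do rewrite -[x _]expr1.
Qed.
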